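(* Let $n,N\ge1$, $\sigma^2>0$, $B_j>0$ ($j\in[N]$), $g_{ij}>0$ and $t_i>0$ ($i\in[n],j\in[N]$). Let $\tilde\gamma>0$ and a partition $0=\gamma_1<\gamma_2<\dots<\gamma_m<\gamma_{m+1}=\tilde\gamma$ be given. Set $b_1=1$, $a_1=\log_2(1+\gamma_2)/\gamma_2$, and for $\ell=2,\dots,m$ $$b_\ell=\frac{\log(\log_2(1+\gamma_{\ell+1}))-\log(\log_2(1+\gamma_\ell))}{\log\gamma_{\ell+1}-\log\gamma_\ell},\qquad a_\ell=e^{\log(\log_2(1+\gamma_{\ell+1}))-b_\ell\log\gamma_{\ell+1}},$$ and $\varphi_\ell(\gamma)=a_\ell\gamma^{b_\ell}$. For $q\in\mathbb{R}^N$ and $u\in\mathbb{R}^{n\times N}$ define, for $\ell\in[m]$, $$\hat f_\ell(q_j,u_{ij})=\log\Big(\frac{\sigma^2}{g_{ij}}e^{-q_j-\frac{u_{ij}}{b_\ell}}+\sum_{k\neq j}\frac{g_{ik}}{g_{ij}}e^{q_k-q_j-\frac{u_{ij}}{b_\ell}}\Big).$$ Put $P_j=e^{q_j}$, $x_{ij}=e^{u_{ij}}$ and $S_{ij}=\frac{P_jg_{ij}}{\sigma^2+\sum_{k\ne j}P_kg_{ik}}$. Then: (i) each $\hat f_\ell$ is a convex function of $(q,u)$; (ii) let $M>0$ and let $\bar z\in\{0,1\}^{n\times N}$ with $\sum_{j=1}^N\bar z_{ij}=N-1$ for all $i$, and $z_{ij}=1-\bar z_{ij}$. Assume $S_{ij}\le\tilde\gamma$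 for all $i,j$. If $$\hat f_\ell(q_j,u_{ij})\le\frac{\log\big(\frac{B_ja_\ell}{t_i}\big)}{b_\ell}+M\bar z_{ij}\quad\text{for all }\ell\in[m],\ i\in[n],\ j\in[N],$$ then $\sum_{j=1}^N x_{ij}B_j\log_2(1+S_{ij})\,z_{ij}\ge t_i$ for all $i\in[n]$; (iii) the conservatism of this approximation vanishes as $m\to\infty$: for any sequence of such partitions of $[0,\tilde\gamma]$ whose maximal subinterval length tends to $0$, $\sup_{\gamma\in[0,\tilde\gamma]}\big(\log_2(1+\gamma)-\min_{\ell\in[m]}\varphi_\ell(\gamma)\big)\to0$.
   Context: $\log$ is the natural logarithm; $[n]=\{1,\dots,n\}$. $P_j$ is the per-resource-block transmit power of base station $j$, $x_{ij}$ the fraction of base station $j$'s bandwidth given to user $i$, $z_{ij}=1$ iff user $i$ is associated with base station $j$, $t_i$ the throughput requirement of user $i$, and $\tilde\gamma$ an upper bound on the SINR. *)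

From HB Require Import structures.
From mathcomp Require Import all_boot all_order all_algebra.
From mathcomp Require Import all_classical all_reals all_analysis.
Set Implicit Arguments. Unset Strict Implicit. Unset Printing Implicit Defensive.
Import Order.TTheory GRing.Theory Num.Theory.
Import numFieldNormedType.Exports.
Local Open Scope ring_scope.

Section Defs.
Variable R : realType.

Definition log2 (x : R) : R := ln x / ln 2.

Definition is_partition (gt : R) (m : nat) (gam : nat -> R) : Prop :=
  gam 1%N = 0 /\ (forall l, (1 <= l <= m)%N -> gam l < gam l.+1) /\ gam m.+1 = gt.

Definition mesh (m : nat) (gam : nat -> R) : R :=
  \big[Num.max/0]_(1 <= l < m.+1) (gam l.+1 - gam l).

Definition bcoef (gam : nat -> R) (l : nat) : R :=
  if l == 1%N then 1
  else (ln (log2 (1 + gam l.+1)) - ln (log2 (1 + gam l)))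
         / (ln (gam l.+1) - ln (gam l)).

Definition acoef (gam : nat -> R) (l : nat) : R :=
  if l == 1%N then log2 (1 + gam 2%N) / gam 2%N
  else expR (ln (log2 (1 + gam l.+1)) - bcoef gam l * ln (gam l.+1)).

Definition phi (gam : nat -> R) (l : nat) (x : R) : R :=
  acoef gam l * x `^ bcoef gam l.

Definition minphi (m : nat) (gam : nat -> R) (x : R) : R :=
  \big[Num.min/phi gam 1 x]_(1 <= l < m.+1) phi gam l x.

Variables (n N : nat).

Definition fhat (sigma2 : R) (g : 'I_n -> 'I_N -> R) (gam : nat -> R) (l : nat)
  (i : 'I_n) (j : 'I_N) (q : 'I_N -> R) (u : 'I_n -> 'I_N -> R) : R :=
  ln (sigma2 / g i j * expR (- q j - u i j / bcoef gam l)
      + \sum_(k < N | k != j) g i k / g i j * expR (q k - q j - u i j / bcoef gam l)).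

Definition SINR (sigma2 : R) (g : 'I_n -> 'I_N -> R) (q : 'I_N -> R)
  (i : 'I_n) (j : 'I_N) : R :=
  expR (q j) * g i j / (sigma2 + \sum_(k < N | k != j) expR (q k) * g i k).

Definition convex_qu (f : ('I_N -> R) -> ('I_n -> 'I_N -> R) -> R) : Prop :=
  forall (q1 q2 : 'I_N -> R) (u1 u2 : 'I_n -> 'I_N -> R) (t : R),
    0 <= t <= 1 ->
    f (fun k => t * q1 k + (1 - t) * q2 k)
      (fun i k => t * u1 i k + (1 - t) * u2 i k)
    <= t * f q1 u1 + (1 - t) * f q2 u2.

End Defs.

From HB Require Import structures.
From mathcomp Require Import all_boot all_order all_algebra.
From mathcomp Require Import all_classical all_reals all_analysis.
From mathcomp Require Import ring lra zify.
Import Order.TTheory GRing.Theory Num.Theory.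
Import numFieldNormedType.Exports.
Local Open Scope classical_set_scope.
Local Open Scope ring_scope.

(* In the log-log coordinates s = ln gamma the rate curve gamma |-> log2 (1 + gamma)
   becomes H s = ln (log2 (1 + e^s)), which is concave: with y = e^s its derivative
   y / ((1 + y) ln (1 + y)) decreases because (1 + y) ln (1 + y) / y increases, by
   concavity of ln.  For l >= 2, phi_l is the exponential of the chord of H over
   [ln gamma_l, ln gamma_(l+1)], and phi_1 is the chord of the concave log2 (1 + .) over
   [0, gamma_2]; hence phi_l lies below log2 (1 + .) on the l-th cell of the partition
   and above it elsewhere.
   (i) In (q, u), fhat_l is the logarithm of a positive combination of exponentials of
   affine functions, hence convex.
   (ii) fhat_l = - u_ij / b_l - ln S_ij, so for the base station with zbar_ij = 0 the
   constraint reads t_i <= x_ij B_j phi_l (S_ij) for every l; the l of the cell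
   containing S_ij gives phi_l (S_ij) <= log2 (1 + S_ij).
   (iii) If gamma lies in the l-th cell, every phi_k with k <> l dominates
   log2 (1 + gamma), while phi_l gamma >= log2 (1 + gamma_l), which is at least
   log2 (1 + gamma) - (gamma_(l+1) - gamma_l) / ln 2; so the gap is at most mesh / ln 2. *)

Section ExpLn.
Context {R : realType}.

Lemma expR_convex (t a b : R) : 0 <= t <= 1 ->
  expR (t * a + (1 - t) * b) <= t * expR a + (1 - t) * expR b.
Proof. by move=> /andP[t0 t1]; exact: (convex_expR (Itv01 t0 t1) a b). Qed.

Lemma ln_convex_comb_ge {c a : R} : 0 <= c <= 1 -> 0 < a ->
  c * ln a <= ln (c * a + (1 - c)).
Proof.
move=> /andP[c0 c1] a0.
have := concave_ln (Itv01 c0 c1) a0 ltr01.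
by rewrite !convRE /= ln1 mulr0 addr0 mulr1.
Qed.

Lemma ln1D_div_nonincr (x y : R) : 0 < x -> x <= y ->
  ln (1 + y) / y <= ln (1 + x) / x.
Proof.
move=> x0 xy; have y0 : 0 < y := lt_le_trans x0 xy.
have c01 : 0 <= x / y <= 1.
  by apply/andP; split; [rewrite divr_ge0 ?ltW | rewrite ler_pdivrMr ?mul1r].
have := ln_convex_comb_ge c01 (addr_gt0 ltr01 y0).
have -> : x / y * (1 + y) + (1 - x / y) = 1 + x by field; rewrite gt_eqF.
have -> : ln (1 + y) / y = x / y * ln (1 + y) / x by field; rewrite !gt_eqF.
by rewrite ler_pM2r ?invr_gt0.
Qed.

Lemma ln1D_mulD_div_nondecr (x y : R) : 0 < x -> x <= y ->
  (1 + x) * ln (1 + x) / x <= (1 + y) * ln (1 + y) / y.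
Proof.
move=> x0 xy; have y0 : 0 < y := lt_le_trans x0 xy.
pose c := x * (1 + y) / (y * (1 + x)).
have c01 : 0 <= c <= 1.
  apply/andP; split; first by rewrite divr_ge0 ?mulr_ge0 ?ltW ?addr_gt0.
  by rewrite /c ler_pdivrMr ?mulr_gt0 ?addr_gt0 // mul1r; nra.
have y1 : 0 < (1 + y)^-1 by rewrite invr_gt0 addr_gt0.
have := ln_convex_comb_ge c01 y1.
have -> : c * (1 + y)^-1 + (1 - c) = (1 + x)^-1.
  by rewrite /c; field; rewrite !gt_eqF ?addr_gt0.
rewrite !lnV ?posrE ?addr_gt0 // mulrN lerN2 => ln_le.
have -> : (1 + y) * ln (1 + y) / y = (1 + x) / x * (c * ln (1 + y)).
  by rewrite /c; field; rewrite !gt_eqF ?addr_gt0.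
by rewrite mulrAC ler_pM2l ?divr_gt0 ?addr_gt0.
Qed.

Lemma ln2_gt0 : 0 < ln (2 : R).
Proof. by rewrite ln_gt0 ?ltr1n. Qed.

Lemma log2_1D_gt0 (x : R) : 0 < x -> 0 < log2 (1 + x).
Proof. by move=> x0; rewrite divr_gt0 ?ln2_gt0 ?ln_gt0 ?ltrDl. Qed.

Lemma log2_1 : log2 1 = 0 :> R.
Proof. by rewrite /log2 ln1 mul0r. Qed.

Lemma log2_1D_sub_le (x y : R) : 0 <= y -> y <= x ->
  log2 (1 + x) - log2 (1 + y) <= (x - y) / ln 2.
Proof.
move=> y0 yx; have y1 : 0 < 1 + y by rewrite ltr_pwDl.
rewrite /log2 -mulrBl ler_pM2r ?invr_gt0 ?ln2_gt0 //.
rewrite -ln_div ?posrE ?(lt_le_trans y1) ?lerD2l //.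
have -> : (1 + x) / (1 + y) = 1 + (x - y) / (1 + y) by field; rewrite gt_eqF.
apply: le_trans (le_ln1Dx _) _.
  apply: (@lt_le_trans _ _ 0); first exact: ltrN10.
  by apply: divr_ge0; [rewrite subr_ge0 | exact: ltW].
by rewrite ler_pdivrMr //; nra.
Qed.

Lemma convex_ln_sum_expR (I : finType) (P : pred I) (c0 a0 b0 t : R)
    (c a b : I -> R) :
  0 < c0 -> (forall k, 0 < c k) -> 0 <= t <= 1 ->
  ln (c0 * expR (t * a0 + (1 - t) * b0)
      + \sum_(k | P k) c k * expR (t * a k + (1 - t) * b k))
  <= t * ln (c0 * expR a0 + \sum_(k | P k) c k * expR (a k))
     + (1 - t) * ln (c0 * expR b0 + \sum_(k | P k) c k * expR (b k)).
Proof.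
move=> c00 c_gt0 t01.
have sum_gt0 x0 (x : I -> R) :
    0 < c0 * expR x0 + \sum_(k | P k) c k * expR (x k).
  by rewrite ltr_pwDl ?mulr_gt0 ?expR_gt0 // sumr_ge0 // => k _;
    rewrite mulr_ge0 ?expR_ge0 ?ltW.
set A := c0 * expR a0 + _; set B := c0 * expR b0 + _.
have [A0 B0] : 0 < A /\ 0 < B by split; apply: sum_gt0.
set L := t * ln A + (1 - t) * ln B.
(* Normalised by e^L, each term is bounded by convexity of expR; the bounds sum to e^L. *)
have term x y : expR (t * x + (1 - t) * y)
    <= expR L * (t * (expR x / A) + (1 - t) * (expR y / B)).
  have -> : t * x + (1 - t) * y = L + (t * (x - ln A) + (1 - t) * (y - ln B)).
    by rewrite /L; ring.
  rewrite expRD ler_pM2l ?expR_gt0 //; apply: le_trans (expR_convex t _ _ t01) _.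
  by rewrite !expRD !expRN !lnK ?posrE.
have : c0 * expR (t * a0 + (1 - t) * b0)
       + \sum_(k | P k) c k * expR (t * a k + (1 - t) * b k)
    <= expR L * (t * (A / A) + (1 - t) * (B / B)).
  apply: le_trans (lerD (ler_wpM2l (ltW c00) (term a0 b0))
    (ler_sum _ (fun k _ => ler_wpM2l (ltW (c_gt0 k)) (term (a k) (b k))))) _.
  have -> : \sum_(k | P k)
        c k * (expR L * (t * (expR (a k) / A) + (1 - t) * (expR (b k) / B)))
      = expR L * (t / A) * \sum_(k | P k) c k * expR (a k)
        + expR L * ((1 - t) / B) * \sum_(k | P k) c k * expR (b k).
    by rewrite !mulr_sumr -big_split; apply: eq_bigr => k _ /=; ring.
  by rewrite /A /B; lra.
rewrite !divff ?gt_eqF // !mulr1 subrKC mulr1 => S_le.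
by rewrite -[leRHS]expRK ler_ln ?posrE ?expR_gt0 ?sum_gt0.
Qed.

End ExpLn.

Section Chord.
Context {R : realType}.

Definition slope (f : R -> R) (s1 s2 : R) : R := (f s2 - f s1) / (s2 - s1).

Definition chord (f : R -> R) (s1 s2 s : R) : R := f s2 + slope f s1 s2 * (s - s2).

Lemma three_chord_of_derive_nonincr (f df : R -> R) :
  (forall x : R, is_derive x 1 f (df x)) -> {homo df : x y /~ x <= y} ->
  forall s1 s s2, s1 <= s <= s2 ->
    (f s2 - f s) * (s - s1) <= (f s - f s1) * (s2 - s).
Proof.
move=> f_df df_nonincr s1 s s2 /andP[s1s ss2].
rewrite !le_eqVlt in s1s ss2.
case/predU1P: s1s => [<-|s1s]; first by rewrite !subrr mulr0 mul0r.
case/predU1P: ss2 => [->|ss2]; first by rewrite !subrr mulr0 mul0r.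
have mvt a b : a < b -> exists2 c, c \in `]a, b[ & f b - f a = df c * (b - a).
  move=> ab; apply: MVT => //.
  apply/continuous_subspaceT => x; apply/differentiable_continuous.
  by apply/derivable1_diffP; case: (f_df x).
have [c1 /andP[_ c1s] ->] := mvt _ _ s1s.
have [c2 /andP[sc2 _] ->] := mvt _ _ ss2.
have df_le : df c2 <= df c1 by apply/df_nonincr/ltW/(lt_trans c1s).
by rewrite mulrAC ler_pM2r ?subr_gt0 // ler_pM2r ?subr_gt0.
Qed.

Section ConcaveChord.
Variable f : R -> R.
Hypothesis three_chord : forall s1 s s2, s1 <= s <= s2 ->
  (f s2 - f s) * (s - s1) <= (f s - f s1) * (s2 - s).

Variables s1 s2 : R.
Hypothesis s12 : s1 < s2.

Let chord_mulE s : chord f s1 s2 s * (s2 - s1)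
  = f s2 * (s2 - s1) + (f s2 - f s1) * (s - s2).
Proof.
by rewrite /chord /slope; field; rewrite subr_eq0 gt_eqF.
Qed.

Lemma chord_le s : s1 <= s <= s2 -> chord f s1 s2 s <= f s.
Proof.
move=> s_in; have := three_chord _ _ _ s_in; case/andP: s_in => s1s ss2 chord3.
by rewrite -(ler_pM2r (_ : 0 < s2 - s1)) ?subr_gt0 // chord_mulE; nra.
Qed.

Lemma le_chord s : s <= s1 \/ s2 <= s -> f s <= chord f s1 s2 s.
Proof.
move=> s_out; rewrite -(ler_pM2r (_ : 0 < s2 - s1)) ?subr_gt0 // chord_mulE.
case: s_out => [ss1|s2s].
- by have := three_chord s s1 s2; rewrite ss1 (ltW s12) => /(_ isT); nra.
- by have := three_chord s1 s2 s; rewrite s2s (ltW s12) => /(_ isT); nra.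
Qed.

Lemma chord_ge_left s : f s1 <= f s2 -> s1 <= s -> f s1 <= chord f s1 s2 s.
Proof.
move=> f12 s1s.
by rewrite -(ler_pM2r (_ : 0 < s2 - s1)) ?subr_gt0 // chord_mulE; nra.
Qed.

End ConcaveChord.
End Chord.

Section LogLogRate.
Context {R : realType}.

Definition lnlog2_1Dexp (s : R) : R := ln (log2 (1 + expR s)).

Lemma lnlog2_1Dexp_ln (x : R) : 0 < x -> lnlog2_1Dexp (ln x) = ln (log2 (1 + x)).
Proof. by move=> x0; rewrite /lnlog2_1Dexp lnK. Qed.

Lemma lnlog2_1Dexp_incr : {mono lnlog2_1Dexp : s1 s2 / s1 < s2}.
Proof.
move=> s1 s2; rewrite /lnlog2_1Dexp ltr_ln ?posrE ?log2_1D_gt0 ?expR_gt0 //.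
rewrite ltr_pM2r ?invr_gt0 ?ln2_gt0 // ltr_ln ?posrE ?addr_gt0 ?expR_gt0 //.
by rewrite ltrD2l ltr_expR.
Qed.

Lemma is_derive_lnlog2_1Dexp (s : R) :
  is_derive s 1 lnlog2_1Dexp (expR s / ((1 + expR s) * ln (1 + expR s))).
Proof.
have e1_gt1 : 1 < 1 + expR s by rewrite ltrDl expR_gt0.
have e1_gt0 : 0 < 1 + expR s := lt_trans ltr01 e1_gt1.
have ln_e1_gt0 : 0 < ln (1 + expR s) := ln_gt0 e1_gt1.
have -> : lnlog2_1Dexp = (fun s => ln (ln (1 + expR s))) - cst (ln (ln 2)).
  apply/funext => r; rewrite /lnlog2_1Dexp /log2 !fctE.
  by rewrite lnM ?lnV ?posrE ?invr_gt0 ?ln2_gt0 ?ln_gt0 ?ltrDl ?expR_gt0.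
have d_exp : is_derive s 1 (fun s : R => 1 + expR s) (expR s).
  by have := is_deriveD (is_derive_cst (1 : R) s 1) (is_derive_expR s); rewrite add0r.
have d_ln := @is_derive1_comp _ (@ln R) (fun s => 1 + expR s) s _ _
  (is_derive1_ln e1_gt0) d_exp.
have d_lnln := @is_derive1_comp _ (@ln R) (fun s => ln (1 + expR s)) s _ _
  (is_derive1_ln ln_e1_gt0) d_ln.
have := is_deriveB d_lnln (is_derive_cst (ln (ln (2 : R))) s 1).
rewrite subr0 (_ : _ * (_ * _) = expR s / ((1 + expR s) * ln (1 + expR s))) //.
by field; rewrite !gt_eqF.
Qed.

Lemma three_chord_lnlog2_1Dexp (s1 s s2 : R) : s1 <= s <= s2 ->
  (lnlog2_1Dexp s2 - lnlog2_1Dexp s) * (s - s1)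
  <= (lnlog2_1Dexp s - lnlog2_1Dexp s1) * (s2 - s).
Proof.
apply: three_chord_of_derive_nonincr is_derive_lnlog2_1Dexp _ _ _ _.
move=> r' r rr'; set e := expR r; set e' := expR r'.
have lnD_gt0 (y : R) : 0 < y -> 0 < (1 + y) * ln (1 + y) / y.
  by move=> y0; rewrite divr_gt0 // mulr_gt0 ?addr_gt0 // ln_gt0 // ltrDl.
rewrite -[e / _]invf_div -[e' / _]invf_div lef_pV2 ?posrE ?lnD_gt0 ?expR_gt0 //.
by apply: ln1D_mulD_div_nondecr; rewrite ?expR_gt0 ?ler_expR.
Qed.

End LogLogRate.

Section PhiFirst.
Context {R : realType}.
Variable gam : nat -> R.
Hypothesis gam2_gt0 : 0 < gam 2%N.

Lemma phi1E x : 0 <= x -> phi gam 1 x = log2 (1 + gam 2%N) / gam 2%N * x.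
Proof. by move=> x0; rewrite /phi /acoef /bcoef /= powRr1. Qed.

Lemma phi1_ge0 x : 0 <= x -> 0 <= phi gam 1 x.
Proof. by move=> x0; rewrite phi1E // mulr_ge0 // divr_ge0 ?ltW ?log2_1D_gt0. Qed.

Let phi1_log2E x : 0 < x ->
  phi gam 1 x = x * (ln (1 + gam 2%N) / gam 2%N) / ln 2.
Proof. by move=> x0; rewrite phi1E ?ltW // /log2; field; rewrite !gt_eqF ?ln2_gt0. Qed.

Lemma phi1_le_log2 x : 0 <= x <= gam 2%N -> phi gam 1 x <= log2 (1 + x).
Proof.
case/andP; rewrite le_eqVlt => /predU1P[<- _|x0 x2].
  by rewrite phi1E // mulr0 addr0 log2_1.
rewrite phi1_log2E // ler_pM2r ?invr_gt0 ?ln2_gt0 //.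
by rewrite mulrC -ler_pdivlMr //; apply: ln1D_div_nonincr.
Qed.

Lemma log2_le_phi1 x : gam 2%N <= x -> log2 (1 + x) <= phi gam 1 x.
Proof.
move=> x2; have x0 := lt_le_trans gam2_gt0 x2.
rewrite phi1_log2E // ler_pM2r ?invr_gt0 ?ln2_gt0 //.
by rewrite mulrC -ler_pdivrMr //; apply: ln1D_div_nonincr.
Qed.

End PhiFirst.

Section PhiChord.
Context {R : realType}.
Variables (gam : nat -> R) (l : nat).
Hypotheses (l_neq1 : l != 1%N) (gam_l_gt0 : 0 < gam l) (gam_lt : gam l < gam l.+1).

Let s1 := ln (gam l).
Let s2 := ln (gam l.+1).
Let gam_l1_gt0 : 0 < gam l.+1 := lt_trans gam_l_gt0 gam_lt.
Let s12 : s1 < s2. Proof. by rewrite ltr_ln ?posrE. Qed.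

Lemma bcoef_slope : bcoef gam l = slope lnlog2_1Dexp s1 s2.
Proof.
by rewrite /bcoef (negbTE l_neq1) /slope !lnlog2_1Dexp_ln.
Qed.

Lemma bcoef_gt0 : 0 < bcoef gam l.
Proof. by rewrite bcoef_slope divr_gt0 ?subr_gt0 ?lnlog2_1Dexp_incr. Qed.

Lemma acoef_gt0 : 0 < acoef gam l.
Proof. by rewrite /acoef (negbTE l_neq1) expR_gt0. Qed.

Lemma phi_ge0 x : 0 <= phi gam l x.
Proof. by rewrite mulr_ge0 ?powR_ge0 ?ltW ?acoef_gt0. Qed.

Lemma phi_chordE x : 0 < x -> phi gam l x = expR (chord lnlog2_1Dexp s1 s2 (ln x)).
Proof.
move=> x0; rewrite /phi /acoef (negbTE l_neq1) /powR gt_eqF // -expRD.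
by rewrite /chord -bcoef_slope lnlog2_1Dexp_ln // /s2 mulrBr addrA addrAC.
Qed.

Let log2_1DE (x : R) : 0 < x -> log2 (1 + x) = expR (lnlog2_1Dexp (ln x)).
Proof. by move=> x0; rewrite lnlog2_1Dexp_ln // lnK // posrE log2_1D_gt0. Qed.

Lemma phi_le_log2 x : gam l <= x <= gam l.+1 -> phi gam l x <= log2 (1 + x).
Proof.
case/andP=> lx xl; have x0 := lt_le_trans gam_l_gt0 lx.
rewrite phi_chordE // log2_1DE // ler_expR chord_le //.
  exact: three_chord_lnlog2_1Dexp.
by rewrite !ler_ln ?posrE ?lx ?xl.
Qed.

Lemma log2_le_phi x : 0 < x -> x <= gam l \/ gam l.+1 <= x ->
  log2 (1 + x) <= phi gam l x.
Proof.
move=> x0 x_out; rewrite phi_chordE // log2_1DE // ler_expR le_chord //.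
  exact: three_chord_lnlog2_1Dexp.
by rewrite !ler_ln ?posrE.
Qed.

Lemma log2_gam_le_phi x : gam l <= x -> log2 (1 + gam l) <= phi gam l x.
Proof.
move=> lx; have x0 := lt_le_trans gam_l_gt0 lx.
rewrite phi_chordE // log2_1DE // ler_expR chord_ge_left //.
  by rewrite le_eqVlt lnlog2_1Dexp_incr s12 orbT.
by rewrite ler_ln ?posrE.
Qed.

End PhiChord.

Section Partition.
Context {R : realType}.
Context {gt : R} {m : nat} {gam : nat -> R}.
Hypotheses (gamP : is_partition gt m gam) (m_gt0 : (0 < m)%N).

Let gam1 : gam 1%N = 0. Proof. by case: gamP. Qed.
Let gam_lt l : (1 <= l <= m)%N -> gam l < gam l.+1.
Proof. by case: gamP => _ [+ _]; apply. Qed.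
Let gam_last : gam m.+1 = gt. Proof. by case: gamP => _ []. Qed.

Lemma partition_le i j : (0 < i)%N -> (i <= j <= m.+1)%N -> gam i <= gam j.
Proof.
move=> i0; elim: j => [|j IH] /andP[ij jm]; first by case: i i0 ij.
rewrite leq_eqVlt ltnS in ij; case/predU1P: ij => [-> //|ij].
by apply: (le_trans (IH _)); [lia | apply/ltW/gam_lt; lia].
Qed.

Lemma partition_ge0 l : (0 < l <= m.+1)%N -> 0 <= gam l.
Proof. by case/andP=> l0 lm; rewrite -gam1 partition_le // lm andbT. Qed.

Lemma partition_gt0 l : (1 < l <= m.+1)%N -> 0 < gam l.
Proof.
move=> l_in; rewrite -gam1; apply: (lt_le_trans (gam_lt 1 _)); first by rewrite m_gt0.
by apply: partition_le.
Qed.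

Lemma partition_cell x : 0 <= x <= gt ->
  exists2 l, (1 <= l <= m)%N & gam l <= x <= gam l.+1.
Proof.
case/andP=> x0 xgt.
suff /(_ m) : forall k, (1 <= k <= m)%N -> x <= gam k.+1 ->
    exists2 l, (1 <= l <= k)%N & gam l <= x <= gam l.+1.
  rewrite gam_last m_gt0 leqnn => /(_ isT xgt) [l lm xl]; exists l => //; lia.
elim=> // k IH km xk; have [k0|k0] := posnP k.
  by exists 1%N; rewrite ?k0 // gam1 x0 -k0.
have [xk'|kx] := lerP x (gam k.+1).
  by have [|l lk xl] := IH _ xk'; [lia | exists l => //; lia].
by exists k.+1; rewrite ?(ltW kx) //; lia.
Qed.

Lemma le_mesh l : (1 <= l <= m)%N -> gam l.+1 - gam l <= mesh m gam.
Proof. by move=> lm; apply: (le_bigmax_seq _ l xpredT); rewrite ?mem_index_iota; lia. Qed.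

Lemma mesh_ge0 : 0 <= mesh m gam.
Proof. by apply: le_trans (le_mesh 1 _); rewrite ?m_gt0 // subr_ge0 ltW ?gam_lt ?m_gt0. Qed.

Lemma minphi_le_phi l x : (1 <= l <= m)%N -> minphi m gam x <= phi gam l x.
Proof. by move=> lm; apply: (ge_bigmin_seq _ l xpredT); rewrite ?mem_index_iota; lia. Qed.

Lemma le_minphi c x : (forall l, (1 <= l <= m)%N -> c <= phi gam l x) ->
  c <= minphi m gam x.
Proof.
move=> c_le; rewrite /minphi big_seq; apply: le_bigmin => [|l].
  by apply: c_le; rewrite m_gt0.
by rewrite mem_index_iota ltnS => /c_le.
Qed.

Let gam2_gt0 : 0 < gam 2%N.
Proof. by apply: partition_gt0; lia. Qed.

Let cell_gt0 l : (1 <= l <= m)%N -> l != 1%N -> 0 < gam l.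
Proof. by move=> lm l1; apply: partition_gt0; lia. Qed.

Lemma partition_coefs_gt0 l : (1 <= l <= m)%N -> 0 < bcoef gam l /\ 0 < acoef gam l.
Proof.
move=> lm; have [->|l1] := eqVneq l 1%N.
  by rewrite /bcoef /acoef /= ltr01 divr_gt0 ?log2_1D_gt0.
by rewrite bcoef_gt0 ?acoef_gt0 ?cell_gt0 ?gam_lt.
Qed.

Lemma partition_phi_ge0 l x : (1 <= l <= m)%N -> 0 <= x -> 0 <= phi gam l x.
Proof.
move=> lm x0; have [->|l1] := eqVneq l 1%N; first exact: phi1_ge0.
by rewrite phi_ge0 ?cell_gt0 ?gam_lt.
Qed.

Lemma partition_phi_le_log2 l x : (1 <= l <= m)%N -> gam l <= x <= gam l.+1 ->
  phi gam l x <= log2 (1 + x).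
Proof.
move=> lm x_in; have [l1|l1] := eqVneq l 1%N.
  by move: x_in; rewrite l1 gam1; apply: phi1_le_log2.
by rewrite phi_le_log2 ?cell_gt0 ?gam_lt.
Qed.

Lemma partition_log2_le_phi l x : (1 <= l <= m)%N -> 0 <= x ->
  x <= gam l \/ gam l.+1 <= x -> log2 (1 + x) <= phi gam l x.
Proof.
move=> lm; rewrite le_eqVlt => /predU1P[<- _|x0 x_out].
  by rewrite addr0 log2_1 partition_phi_ge0.
have [l1|l1] := eqVneq l 1%N; last by rewrite log2_le_phi ?cell_gt0 ?gam_lt.
move: x_out; rewrite l1 gam1 => -[x_le0|]; last exact: log2_le_phi1.
by move: (lt_le_trans x0 x_le0); rewrite ltxx.
Qed.

Lemma partition_log2_gam_le_phi l x : (1 <= l <= m)%N -> gam l <= x ->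
  log2 (1 + gam l) <= phi gam l x.
Proof.
move=> lm lx; have [l1|l1] := eqVneq l 1%N.
  by rewrite l1 gam1 addr0 log2_1 phi1_ge0 // -gam1 -l1.
by rewrite log2_gam_le_phi ?cell_gt0 ?gam_lt.
Qed.

Lemma exists_phi_le_log2 x : 0 <= x <= gt ->
  exists2 l, (1 <= l <= m)%N & phi gam l x <= log2 (1 + x).
Proof.
move=> /partition_cell[l lm x_in]; exists l => //.
exact: partition_phi_le_log2.
Qed.

Lemma minphi_le_log2 x : 0 <= x <= gt -> minphi m gam x <= log2 (1 + x).
Proof.
move=> /exists_phi_le_log2[l lm le_l].
exact: le_trans (minphi_le_phi l x lm) le_l.
Qed.

Lemma log2_sub_minphi_le x : 0 <= x <= gt ->
  log2 (1 + x) - minphi m gam x <= mesh m gam / ln 2.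
Proof.
move=> x_range; have x0 : 0 <= x by case/andP: x_range.
have [l0 l0m /andP[l0x xl0]] := partition_cell _ x_range.
have M0 : 0 <= mesh m gam / ln 2 by rewrite divr_ge0 ?mesh_ge0 ?ltW ?ln2_gt0.
rewrite lerBlDr -lerBlDl; apply: le_minphi => l lm.
have [ll0|l0l|->] := ltngtP l l0.
- apply: (@le_trans _ _ (log2 (1 + x))); first by rewrite lerBlDr lerDl.
  apply: partition_log2_le_phi => //; right.
  by apply: le_trans l0x; apply: partition_le => //; lia.
- apply: (@le_trans _ _ (log2 (1 + x))); first by rewrite lerBlDr lerDl.
  apply: partition_log2_le_phi => //; left.
  by apply: le_trans xl0 _; apply: partition_le => //; lia.
apply: le_trans (partition_log2_gam_le_phi _ _ l0m l0x); rewrite lerBlDr -lerBlDl.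
have gam_l0_ge0 : 0 <= gam l0 by apply: partition_ge0; lia.
apply: le_trans (log2_1D_sub_le _ _ gam_l0_ge0 l0x) _.
rewrite ler_pM2r ?invr_gt0 ?ln2_gt0 //.
by apply: le_trans (le_mesh _ l0m); rewrite lerD2r.
Qed.

Lemma sup_log2_sub_minphi (S := [set log2 (1 + x) - minphi m gam x | x in `[0, gt]]) :
  has_sup S /\ 0 <= sup S <= mesh m gam / ln 2.
Proof.
have gt0 : 0 <= gt by rewrite -gam_last; apply: partition_ge0; lia.
have S_ub : ubound S (mesh m gam / ln 2).
  by move=> y [x]; rewrite /= in_itv => x_in <-; apply: log2_sub_minphi_le.
have S0 : S (log2 (1 + 0) - minphi m gam 0).
  by exists 0 => //=; rewrite in_itv /= lexx gt0.
have S_sup : has_sup S by split; eexists; [exact: S0 | exact: S_ub].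
split=> //; rewrite ge_sup ?andbT //; last by eexists; exact: S0.
apply: le_trans (sup_upper_bound S_sup S0).
by rewrite subr_ge0 minphi_le_log2 // lexx.
Qed.

End Partition.

Lemma exists_negb_of_sum_lt (N : nat) (z : 'I_N -> bool) :
  (\sum_(j < N) (z j : nat) < N)%N -> exists j, ~~ z j.
Proof.
case: (pickP (fun j => ~~ z j)) => [j zj _|all_z]; first by exists j.
rewrite (eq_bigr (fun _ => 1%N)) ?sum1_card ?card_ord ?ltnn // => j _.
by have := all_z j; case: (z j).
Qed.

Section Network.
Context {R : realType}.
Variables (n N : nat) (sigma2 : R) (g : 'I_n -> 'I_N -> R).
Hypotheses (sigma2_gt0 : 0 < sigma2) (g_gt0 : forall i j, 0 < g i j).

Lemma SINR_gt0 q i j : 0 < SINR sigma2 g q i j.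
Proof.
rewrite divr_gt0 ?mulr_gt0 ?expR_gt0 // ltr_pwDl // sumr_ge0 // => k _.
by rewrite mulr_ge0 ?expR_ge0 ?ltW.
Qed.

Lemma fhatE gam l i j q u :
  fhat sigma2 g gam l i j q u = - (u i j / bcoef gam l) - ln (SINR sigma2 g q i j).
Proof.
set b := bcoef gam l.
rewrite /fhat -/b (_ : _ + _ = expR (- (u i j / b)) / SINR sigma2 g q i j).
  by rewrite ln_div ?posrE ?expR_gt0 ?SINR_gt0 // expRK.
rewrite /SINR invf_div mulrDl mulrDr mulr_suml mulr_sumr; congr (_ + _).
  by rewrite !expRD !expRN invfM; ring.
by apply: eq_bigr => k _; rewrite !expRD !expRN invfM; ring.
Qed.

Lemma convex_fhat gam l i j : convex_qu (fun q u => fhat sigma2 g gam l i j q u).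
Proof.
move=> q1 q2 u1 u2 t t01; rewrite /fhat; set b := bcoef gam l.
set qt := t * q1 j + (1 - t) * q2 j; set ut := t * u1 i j + (1 - t) * u2 i j.
have -> : - qt - ut / b = t * (- q1 j - u1 i j / b) + (1 - t) * (- q2 j - u2 i j / b).
  by rewrite /qt /ut; ring.
have affine x1 x2 : t * x1 + (1 - t) * x2 - qt - ut / b
    = t * (x1 - q1 j - u1 i j / b) + (1 - t) * (x2 - q2 j - u2 i j / b).
  by rewrite /qt /ut; ring.
under eq_bigr => k _ do rewrite affine.
by apply: convex_ln_sum_expR => // [|k]; apply: divr_gt0.
Qed.

Lemma rate_ge_of_fhat_le {gam l} {B t : R} {i j q u} :
  0 < B -> 0 < t -> 0 < bcoef gam l -> 0 < acoef gam l ->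
  fhat sigma2 g gam l i j q u <= ln (B * acoef gam l / t) / bcoef gam l ->
  t <= expR (u i j) * B * phi gam l (SINR sigma2 g q i j).
Proof.
set S := SINR _ _ _ _ _; set a := acoef gam l; set b := bcoef gam l.
move=> B0 t0 b0 a0 fhat_le.
have w_le : - (u i j + b * ln S) <= ln (B * a / t).
  move: fhat_le; rewrite fhatE -/S -(ler_pM2l b0).
  have -> : b * (- (u i j / b) - ln S) = - (u i j + b * ln S) by field; rewrite gt_eqF.
  by have -> : b * (ln (B * a / t) / b) = ln (B * a / t) by field; rewrite gt_eqF.
rewrite -ler_expR lnK ?posrE ?divr_gt0 ?mulr_gt0 // expRN in w_le.
rewrite ler_pdivlMr // ler_pdivrMl ?expR_gt0 // expRD in w_le.
by rewrite /phi -/a -/b /powR gt_eqF ?SINR_gt0 //; lra.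
Qed.

Lemma throughput_ge (gt M : R) (m : nat) (gam : nat -> R) (B : 'I_N -> R)
    (t : 'I_n -> R) (zbar : 'I_n -> 'I_N -> bool) q u :
  is_partition gt m gam -> (0 < m)%N -> (0 < N)%N ->
  (forall j, 0 < B j) -> (forall i, 0 < t i) ->
  (forall i, (\sum_(j < N) (zbar i j : nat))%N = N.-1) ->
  (forall i j, SINR sigma2 g q i j <= gt) ->
  (forall l, (1 <= l <= m)%N -> forall i j,
     fhat sigma2 g gam l i j q u
     <= ln (B j * acoef gam l / t i) / bcoef gam l + M * (zbar i j)%:R) ->
  forall i, t i <= \sum_(j < N) expR (u i j) * B j * log2 (1 + SINR sigma2 g q i j)
                                * (1 - (zbar i j)%:R).
Proof.
move=> gamP m_gt0 N_gt0 B_gt0 t_gt0 zbar_sum S_le f_le i.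
have [j0 zj0] : exists j, ~~ zbar i j.
  by apply: exists_negb_of_sum_lt; rewrite zbar_sum ltn_predL.
set S := SINR sigma2 g q i j0.
have S_in : 0 <= S <= gt by rewrite ltW ?SINR_gt0 ?S_le.
have [l lm phi_le] := exists_phi_le_log2 gamP m_gt0 _ S_in.
have [b_gt0 a_gt0] := partition_coefs_gt0 gamP m_gt0 _ lm.
have := f_le l lm i j0; rewrite (negbTE zj0) mulr0 addr0.
move=> /(rate_ge_of_fhat_le (B_gt0 j0) (t_gt0 i) b_gt0 a_gt0) rate.
have term_ge0 j :
    0 <= expR (u i j) * B j * log2 (1 + SINR sigma2 g q i j) * (1 - (zbar i j)%:R).
  apply: mulr_ge0; last by case: (zbar i j); rewrite /= ?mulr1n ?mulr0n ?subrr ?subr0.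
  apply: mulr_ge0; last exact/ltW/log2_1D_gt0/SINR_gt0.
  by apply: mulr_ge0; [exact: expR_ge0 | exact/ltW/B_gt0].
rewrite (bigD1 j0) //= (negbTE zj0) subr0 mulr1 -[t i]addr0.
apply: lerD; last by rewrite sumr_ge0.
by apply: le_trans rate _; rewrite ler_wpM2l // mulr_ge0 ?expR_ge0 ?ltW.
Qed.

End Network.

Theorem theorem1 (R : realType) (n N m : nat) (sigma2 : R)
  (B : 'I_N -> R) (g : 'I_n -> 'I_N -> R) (t : 'I_n -> R)
  (gt : R) (gam : nat -> R) :
  (1 <= n)%N -> (1 <= N)%N -> (1 <= m)%N ->
  0 < sigma2 ->
  (forall j, 0 < B j) ->
  (forall i j, 0 < g i j) ->
  (forall i, 0 < t i) ->
  0 < gt ->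
  is_partition gt m gam ->
  (* (i) convexity *)
  (forall l, (1 <= l <= m)%N -> forall i j,
     convex_qu (fun q u => fhat sigma2 g gam l i j q u))
  /\
  (* (ii) conservative approximation of the throughput constraint *)
  (forall (M : R) (zbar : 'I_n -> 'I_N -> bool)
          (q : 'I_N -> R) (u : 'I_n -> 'I_N -> R),
     0 < M ->
     (forall i, (\sum_(j < N) (zbar i j : nat))%N = N.-1) ->
     (forall i j, SINR sigma2 g q i j <= gt) ->
     (forall l, (1 <= l <= m)%N -> forall i j,
        fhat sigma2 g gam l i j q u
        <= ln (B j * acoef gam l / t i) / bcoef gam l + M * (zbar i j)%:R) ->
     forall i,
       t i <= \sum_(j < N) expR (u i j) * B j * log2 (1 + SINR sigma2 g q i j)
                           * (1 - (zbar i j)%:R))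
  /\
  (* (iii) vanishing conservatism under refinement *)
  (forall (ms : nat -> nat) (gams : nat -> nat -> R),
     (forall k, (1 <= ms k)%N) ->
     (forall k, is_partition gt (ms k) (gams k)) ->
     (fun k => mesh (ms k) (gams k)) @ \oo --> (0 : R) ->
     let S k := [set log2 (1 + x) - minphi (ms k) (gams k) x | x in `[0, gt]] in
     (forall k, has_sup (S k)) /\
     (fun k => sup (S k)) @ \oo --> (0 : R)).
Proof.
move=> _ N_gt0 m_gt0 sigma2_gt0 B_gt0 g_gt0 t_gt0 _ gamP.
split; [|split].
- by move=> l _ i j; apply: convex_fhat.
- by move=> M zbar q u _; apply: throughput_ge.
move=> ms gams ms_gt0 gamsP mesh_cvg S.
have S_bounds k := sup_log2_sub_minphi (gamsP k) (ms_gt0 k).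
split=> [k|]; first by case: (S_bounds k).
apply: (@squeeze_cvgr _ _ _ _ (fun=> 0) (fun k => mesh (ms k) (gams k) / ln 2)).
- by apply: nearW => k; case: (S_bounds k) => _.
- exact: cvg_cst.
- by rewrite -(mul0r (ln 2)^-1); apply: cvgMr_tmp.
Qed.
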